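(* Let $k\ge 3$, $n_1=\cdots=n_k\ge 2$, $r\in[k]$, and let $G,G'\in\mathcal{O}(CS^r_{n_1,\dots,n_k})$. Suppose that $G$ and $G'$ belong to the same one of the following three classes: (Case 1) $G=\Gamma(\text{complete};\ t_i=\mathrm{ss}\text{ for }i\in I,\ t_i=\mathrm{sc}\text{ for }i\notin I)$ for some $I\subseteq[k]$; (Case 2) $G=\Gamma(\text{star toward }j;\ t_j=\mathrm{sc},\ t_i=\mathrm{ss}\text{ for }i\in I,\ t_i=\mathrm{c}\text{ for }i\notin I\cup\{j\})$ for some $j\in[k]$ and $I\subseteq[k]\setminus\{j\}$; (Case 3) the same as Case 2 but with $t_j=\mathrm{c}$; and similarly $G'$ with index set $I'$ (and possibly a different index $j'$). If $|I|=|I'|$, then $G$ and $G'$ are isomorphic.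
   Context: $V=U_1\sqcup\cdots\sqcup U_k$, $|U_i|=n_i$. The clique-star $CS^r_{n_1,\dots,n_k}$: each $U_i$ is a clique, every vertex of $U_r$ is adjacent to every vertex of each $U_i$, $i\ne r$, no edges between $U_i,U_l$ for distinct $i,l\ne r$. The local complement $c_v(G)$ complements the edges among the neighbours of $v$; $\mathcal{O}(G)$ is the set of graphs on $V$ obtainable from $G$ by finite sequences of local complements. Graph family $\Gamma$: each $i$ gets a type $t_i\in\{\mathrm{c},\mathrm{sc},\mathrm{ss}\}$: $\mathrm{c}$: $U_i$ a clique, $R_i=U_i$; $\mathrm{sc}$: $U_i$ independent, $R_i=U_i$; $\mathrm{ss}$: a center $c_i\in U_i$ adjacent to all other vertices of $U_i$, no other internal edges, $R_i=\{c_i\}$. Central type ''complete'': for all $i\ne l$, all edges between $R_i$ and $R_l$; ''star toward $j$'': for each $i\ne j$ all edges between $R_i$ and $R_j$, and no other edges between different parts. (Every graph in $\mathcal{O}(CS^r_{n_1,\dots,n_k})$ is of one of the three case forms.) *)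

From mathcomp Require Import all_boot all_fingroup.
Set Implicit Arguments. Unset Strict Implicit. Unset Printing Implicit Defensive.

(* Vertex set V = U_1 ⊔ ... ⊔ U_k with |U_i| = n : vertex (i, a) lies in U_i. *)
Definition vtx (k n : nat) := ('I_k * 'I_n)%type.

Definition graph (k n : nat) := {set vtx k n * vtx k n}.

Definition adj k n (G : graph k n) (x y : vtx k n) : bool := (x, y) \in G.

Definition clique_star k n (r : 'I_k) : graph k n :=
  [set p : vtx k n * vtx k n | (p.1 != p.2) &&
     [|| p.1.1 == p.2.1, p.1.1 == r | p.2.1 == r]].

Definition local_complement k n (v : vtx k n) (G : graph k n) : graph k n :=
  [set p : vtx k n * vtx k n |
     if [&& p.1 != p.2, adj G v p.1 & adj G v p.2] then p \notin G else p \in G].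

Inductive lc_orbit k n (G0 : graph k n) : graph k n -> Prop :=
  | lc_orbit_refl : lc_orbit G0 G0
  | lc_orbit_step v G : lc_orbit G0 G -> lc_orbit G0 (local_complement v G).

Definition isomorphic k n (G H : graph k n) : Prop :=
  exists f : {perm vtx k n}, forall x y, adj G x y = adj H (f x) (f y).

Inductive ptype := Tc | Tsc | Tss.
Definition ptype_eqb (a b : ptype) : bool :=
  match a, b with Tc, Tc | Tsc, Tsc | Tss, Tss => true | _, _ => false end.

Inductive ctype (k : nat) := Complete | StarToward of 'I_k.

Definition inR k n (t : 'I_k -> ptype) (c : 'I_k -> 'I_n) (x : vtx k n) : bool :=
  if ptype_eqb (t x.1) Tss then x.2 == c x.1 else true.

Definition Gamma k n (ct : ctype k) (t : 'I_k -> ptype) (c : 'I_k -> 'I_n)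
  : graph k n :=
  [set p : vtx k n * vtx k n |
     let x := p.1 in let y := p.2 in
     if x.1 == y.1 then
       (x != y) &&
       match t x.1 with
       | Tc => true
       | Tsc => false
       | Tss => (x.2 == c x.1) || (y.2 == c x.1)
       end
     else
       [&& inR t c x, inR t c y &
           match ct with
           | Complete => true
           | StarToward j => (x.1 == j) || (y.1 == j)
           end]].

Definition case1 k n (G : graph k n) (I : {set 'I_k}) : Prop :=
  exists c : 'I_k -> 'I_n,
    G = Gamma (Complete k) (fun i => if i \in I then Tss else Tsc) c.

Definition case23 k n (tj : ptype) (G : graph k n) (I : {set 'I_k}) : Prop :=
  exists (j : 'I_k) (c : 'I_k -> 'I_n), j \notin I /\
    G = Gamma (StarToward j)
          (fun i => if i == j then tj else if i \in I then Tss else Tc) c.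

Definition case2 k n (G : graph k n) (I : {set 'I_k}) := case23 Tsc G I.
Definition case3 k n (G : graph k n) (I : {set 'I_k}) := case23 Tc G I.

From mathcomp Require Import all_boot all_fingroup.
Set Implicit Arguments. Unset Strict Implicit. Unset Printing Implicit Defensive.

(* Within one class, the graphs differ only in the index set I, the special
   part j and the centres c.  A permutation s of the parts carrying I onto I'
   (and j to j'), followed inside each part i by the transposition exchanging
   c_i and c'_(s i), is therefore an isomorphism. *)

Lemma perm_of_card_eq (T : finType) (A B : {set T}) : #|A| = #|B| ->
  exists s : {perm T}, {mono s : x / x \in A >-> x \in B}.
Proof.
have [m] := ubnP #|A :\: B|; elim: m A => // m IH A ltAB_m cardAB.
have [/eqP AB0 | [x /setDP[xA xNB]]] := set_0Vmem (A :\: B).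
  have -> : A = B by apply/eqP; rewrite eqEcard -setD_eq0 AB0 cardAB leqnn /=.
  by exists 1%g => z; rewrite perm1.
have [y /setDP[yB yNA]] : exists y, y \in B :\: A.
  apply/set0Pn; rewrite -card_gt0 cardsD -cardAB setIC -cardsD card_gt0.
  by apply/set0Pn; exists x; apply/setDP.
(* Swapping x and y shrinks A :\: B without changing #|A|. *)
pose t := tperm x y.
have card_tA : #|t @^-1: A| = #|B| by rewrite (card_preimset _ perm_inj).
have tA_B : (t @^-1: A) :\: B = (A :\: B) :\ x.
  apply/setP => z; rewrite !inE /t; case: tpermP => [->|->|/eqP/negPf-> _].
  - by rewrite eqxx (negPf yNA) andbF.
  - by rewrite yB andbF.
  - by [].
have [|s s_mono] := IH (t @^-1: A) _ card_tA.
  rewrite tA_B -ltnS; apply: leq_trans ltAB_m; apply/proper_card/properD1.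
  by apply/setDP.
by exists (t * s)%g => z; rewrite permM s_mono inE /t tpermK.
Qed.

Lemma perm_of_card_eq_notin (T : finType) (A B : {set T}) a b : #|A| = #|B| ->
  a \notin A -> b \notin B ->
  exists2 s : {perm T}, s a = b & {mono s : x / x \in A >-> x \in B}.
Proof.
move=> /perm_of_card_eq[s s_mono] aNA bNB.
exists (s * tperm (s a) b)%g; first by rewrite permM tpermL.
move=> x; rewrite permM -s_mono.
by case: tpermP => [->|->|//]; rewrite s_mono (negPf aNA) (negPf bNB).
Qed.

Lemma tperm_eqR (T : finType) (x y z : T) : (tperm x y z == y) = (z == x).
Proof. by rewrite -{2}(tpermL x y) (inj_eq perm_inj). Qed.

Section FiberPerm.

Variables (k n : nat) (s : {perm 'I_k}) (tau : 'I_k -> {perm 'I_n}).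

Let fiber_map (x : vtx k n) : vtx k n := (s x.1, tau x.1 x.2).

Lemma fiber_map_inj : injective fiber_map.
Proof.
by move=> [i a] [l b] [/perm_inj eil]; rewrite /= -eil => /perm_inj ->.
Qed.

Definition fiber_perm : {perm vtx k n} := perm fiber_map_inj.

Lemma fiber_permE i a : fiber_perm (i, a) = (s i, tau i a).
Proof. by rewrite permE. Qed.

End FiberPerm.

Definition ctype_perm k (s : {perm 'I_k}) (ct : ctype k) : ctype k :=
  match ct with Complete => Complete k | StarToward j => StarToward (s j) end.

Lemma Gamma_iso k n (s : {perm 'I_k}) (ct : ctype k) t t' (c c' : 'I_k -> 'I_n) :
  (forall i, t' (s i) = t i) ->
  isomorphic (Gamma ct t c) (Gamma (ctype_perm s ct) t' c').
Proof.
move=> t_s.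
pose tau i := tperm (c i) (c' (s i)).
have tau_c i a : (tau i a == c' (s i)) = (a == c i) by exact: tperm_eqR.
exists (fiber_perm s tau) => -[i a] [l b].
rewrite /adj !fiber_permE !inE /= (inj_eq perm_inj) xpair_eqE.
have inR_s j x : inR t' c' (s j, tau j x) = inR t c (j, x).
  by rewrite /inR /= t_s; case: (t j) => //=; rewrite tau_c.
case: eqP => [<- | _]; last first.
  rewrite !inR_s; case: ct => //= j.
  by rewrite !(inj_eq perm_inj).
rewrite xpair_eqE eqxx (inj_eq perm_inj) t_s.
by case: (t i) => //=; rewrite !tau_c.
Qed.

Lemma case1_iso k n (G G' : graph k n) (I I' : {set 'I_k}) :
  #|I| = #|I'| -> case1 G I -> case1 G' I' -> isomorphic G G'.
Proof.
move=> cardI [c ->] [c' ->]; have [s s_mono] := perm_of_card_eq cardI.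
by apply: (Gamma_iso (s := s) (Complete k)) => i /=; rewrite s_mono.
Qed.

Lemma case23_iso k n tj (G G' : graph k n) (I I' : {set 'I_k}) :
  #|I| = #|I'| -> case23 tj G I -> case23 tj G' I' -> isomorphic G G'.
Proof.
move=> cardI [j [c [jNI ->]]] [j' [c' [j'NI' ->]]].
have [s <- s_mono] := perm_of_card_eq_notin cardI jNI j'NI'.
apply: (Gamma_iso (s := s) (StarToward j)) => i /=.
by rewrite (inj_eq perm_inj) s_mono.
Qed.

Theorem lemma8 (k n : nat) (r : 'I_k) (G G' : graph k n)
  (I I' : {set 'I_k}) :
  3 <= k -> 2 <= n ->
  lc_orbit (clique_star n r) G -> lc_orbit (clique_star n r) G' ->
  (case1 G I /\ case1 G' I') \/ (case2 G I /\ case2 G' I') \/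
  (case3 G I /\ case3 G' I') ->
  #|I| = #|I'| ->
  isomorphic G G'.
Proof.
move=> _ _ _ _ cases cardI.
case: cases => [[G1 G1'] | [[G2 G2'] | [G3 G3']]].
- exact: case1_iso G1 G1'.
- exact: case23_iso G2 G2'.
- exact: case23_iso G3 G3'.
Qed.
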